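(* Let $f\colon\mathbb{R}\to\mathbb{R}$ be an injective function. Then $\alpha(f)=0$ if and only if $f$ is monotone.
   Context: $\mathrm{Conf}_2(\mathbb{R})=\{(x,y)\in\mathbb{R}^2: x\neq y\}$. $S^0=\{\pm1\}$ with the geodesic (angle) metric $d(u,v)=\arccos(uv)$, so $d(1,-1)=\pi$. For a topological space $X$ and a metric space $Y$, $\delta(g)=\inf\{\delta\ge 0 : \text{for every } x\in X \text{ there is an open neighborhood } U_x \text{ of } x \text{ with } \operatorname{diam}(g(U_x))\le\delta\}$. For injective $f\colon\mathbb{R}\to\mathbb{R}$, $\Phi_f\colon\mathrm{Conf}_2(\mathbb{R})\to S^0$, $\Phi_f(x,y)=\frac{f(x)-f(y)}{|f(x)-f(y)|}$, and $\alpha(f)=\delta(\Phi_f)$. *)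

From Stdlib Require Import Reals.
From Coquelicot Require Import Coquelicot.
Open Scope R_scope.

Definition Conf2 : Type := { p : R * R | fst p <> snd p }.

Definition Conf2_open (V : Conf2 -> Prop) : Prop :=
  exists U : R * R -> Prop,
    @open (prod_UniformSpace R_UniformSpace R_UniformSpace) U /\
    forall z : Conf2, V z <-> U (proj1_sig z).

(* S^0 = {1,-1} ⊂ R with the geodesic (angle) metric d(u,v) = arccos(u v). *)
Definition S0_dist (u v : R) : R := acos (u * v).

(* The set of admissible δ's in the definition of δ(g), for g : X -> Y with
   X a space given by its open sets and Y a metric space (dist d).
   diam(g(U)) <= δ  is  "all pairwise distances in g(U) are <= δ". *)
Definition delta_adm {X Y : Type} (isopen : (X -> Prop) -> Prop)
  (d : Y -> Y -> R) (g : X -> Y) (δ : R) : Prop :=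
  0 <= δ /\
  forall x : X, exists U : X -> Prop,
    isopen U /\ U x /\
    forall u v : X, U u -> U v -> d (g u) (g v) <= δ.

Definition delta {X Y : Type} (isopen : (X -> Prop) -> Prop)
  (d : Y -> Y -> R) (g : X -> Y) : Rbar :=
  Glb_Rbar (delta_adm isopen d g).

Definition Phi (f : R -> R) (z : Conf2) : R :=
  let x := fst (proj1_sig z) in let y := snd (proj1_sig z) in
  (f x - f y) / Rabs (f x - f y).

Definition alpha (f : R -> R) : Rbar := delta Conf2_open S0_dist (Phi f).

Definition injective (f : R -> R) : Prop := forall x y, f x = f y -> x = y.

Definition monotone (f : R -> R) : Prop :=
  (forall x y, x <= y -> f x <= f y) \/ (forall x y, x <= y -> f y <= f x).

From Stdlib Require Import Reals Lra Classical.
From Coquelicot Require Import Coquelicot.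
Open Scope R_scope.

(* Phi_f takes values in S^0, whose two points are at distance pi, so
   alpha(f) = 0 holds exactly when Phi_f is locally constant on Conf_2(R).
   Each half-plane {x < y}, {x > y} of Conf_2(R) is path-connected, so Phi_f
   is locally constant exactly when the sign of f a - f b is the same for all
   a < b; for injective f this is strict monotonicity. *)

Lemma locally_const_continuous {U : UniformSpace} (G : U -> R) (t : U) :
  locally t (fun s => G s = G t) -> continuous G t.
Proof.
  intros HG P HP. apply filter_imp with (2 := HG).
  intros s ->. exact (locally_singleton _ _ HP).
Qed.

(* The indicator of {s | G s <> G a} is continuous and {0,1}-valued; by the IVT it
   cannot take both values. *)
Lemma locally_const_R_eq (G : R -> R) :
  (forall t, locally t (fun s => G s = G t)) -> forall a b, G a = G b.
Proof.
  intros HG a b. apply NNPP; intros Hab.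
  set (H := fun s => if Req_EM_T (G s) (G a) then 0 else 1).
  assert (HH : forall t, locally t (fun s => H s = H t)).
  { intros t. apply filter_imp with (2 := HG t). intros s Hs. unfold H. now rewrite Hs. }
  assert (Ha : H a = 0) by (unfold H; destruct (Req_EM_T (G a) (G a)); congruence).
  assert (Hb : H b = 1) by (unfold H; destruct (Req_EM_T (G b) (G a)); congruence).
  destruct (IVT_gen_consistent H a b (/ 2)) as [z [_ Hz]].
  - intros t. apply locally_const_continuous, HH.
  - rewrite Ha, Hb, Rmin_left, Rmax_right; lra.
  - revert Hz. unfold H. destruct (Req_EM_T (G z) (G a)); lra.
Qed.

Lemma continuous_pair {U V W : UniformSpace} (f : U -> V) (g : U -> W) (t : U) :
  continuous f t -> continuous g t -> continuous (fun s => (f s, g s)) t.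
Proof.
  intros Hf Hg. apply (continuous_comp_2 f g pair); auto.
  apply continuous_ext with (f := fun p => p); [intros [x y]; reflexivity|].
  apply continuous_id.
Qed.

Lemma open_lt_continuous {U : UniformSpace} (F G : U -> R) :
  (forall p, continuous F p) -> (forall p, continuous G p) ->
  open (fun p => F p < G p).
Proof.
  intros HF HG.
  apply open_ext with (fun p => 0 < minus (G p) (F p)).
  { intros p. unfold minus, plus, opp; simpl. lra. }
  apply (open_comp (fun p => minus (G p) (F p)) (fun u => 0 < u)).
  - intros p _. apply (@continuous_minus U R_AbsRing R_NormedModule); auto.
  - apply open_gt.
Qed.

Lemma open_fst_lt_snd : open (fun p : R * R => fst p < snd p).
Proof. apply open_lt_continuous; intros [x y]; [apply continuous_fst|apply continuous_snd]. Qed.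

Lemma open_snd_lt_fst : open (fun p : R * R => snd p < fst p).
Proof. apply open_lt_continuous; intros [x y]; [apply continuous_snd|apply continuous_fst]. Qed.

(* Unlike the straight segment, this path stays in the half-plane for every real t:
   the gap (1 - t)^2 (b - a) + t^2 (d - c) never vanishes. *)
Lemma half_plane_path (a b c d : R) : a < b -> c < d ->
  exists γ : R -> R * R, (forall t, fst (γ t) < snd (γ t)) /\
    (forall t, continuous γ t) /\ γ 0 = (a, b) /\ γ 1 = (c, d).
Proof.
  intros Hab Hcd.
  exists (fun t => (a + t * (c - a), a + t * (c - a) + ((1 - t)² * (b - a) + t² * (d - c)))).
  split; [|split; [|split]].
  - intros t. simpl.
    assert (0 <= (1 - t)² * (b - a)) by (apply Rmult_le_pos; [apply Rle_0_sqr|lra]).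
    destruct (Req_dec t 0) as [->|Ht]; [unfold Rsqr in *; lra|].
    assert (0 < t² * (d - c)) by (apply Rmult_lt_0_compat; [apply Rsqr_pos_lt|lra]; auto).
    lra.
  - intros t. apply continuous_pair;
      apply (@ex_derive_continuous R_AbsRing R_NormedModule); auto_derive; auto.
  - f_equal; unfold Rsqr; ring.
  - f_equal; unfold Rsqr; ring.
Qed.

Definition locally_constant {X Y : Type} (isopen : (X -> Prop) -> Prop) (g : X -> Y) : Prop :=
  forall x, exists U, isopen U /\ U x /\ forall u v, U u -> U v -> g u = g v.

Lemma delta_eq_0 {X Y : Type} (isopen : (X -> Prop) -> Prop) (d : Y -> Y -> R) (g : X -> Y) :
  delta_adm isopen d g 0 -> delta isopen d g = Finite 0.
Proof.
  intros H0. apply is_glb_Rbar_unique. split.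
  - intros δ [Hδ _]. exact Hδ.
  - intros l Hl. exact (Hl 0 H0).
Qed.

Lemma delta_eq_0_small_adm {X Y : Type} (isopen : (X -> Prop) -> Prop)
  (d : Y -> Y -> R) (g : X -> Y) :
  delta isopen d g = Finite 0 ->
  forall eps, 0 < eps -> exists δ, delta_adm isopen d g δ /\ δ < eps.
Proof.
  intros H0 eps Heps. apply NNPP; intros Hno.
  assert (Hlb : is_lb_Rbar (delta_adm isopen d g) eps).
  { intros δ Hδ. simpl. apply Rnot_lt_le. intros Hlt. apply Hno. now exists δ. }
  pose proof (proj2 (Glb_Rbar_correct (delta_adm isopen d g)) eps Hlb) as Hle.
  unfold delta in H0. rewrite H0 in Hle. simpl in Hle. lra.
Qed.

Lemma S0_dist_diag (s : R) : s = 1 \/ s = -1 -> S0_dist s s = 0.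
Proof.
  intros Hs. unfold S0_dist. replace (s * s) with 1 by (destruct Hs; subst; ring).
  exact acos_1.
Qed.

Lemma S0_dist_antipodal (s t : R) : s = 1 \/ s = -1 -> t = 1 \/ t = -1 -> s <> t ->
  S0_dist s t = PI.
Proof.
  intros Hs Ht Hst. unfold S0_dist. replace (s * t) with (- (1)).
  - rewrite acos_opp, acos_1. ring.
  - destruct Hs, Ht; subst; try ring; congruence.
Qed.

Section S0Valued.

Variables (X : Type) (isopen : (X -> Prop) -> Prop) (g : X -> R).
Hypothesis g_S0 : forall x, g x = 1 \/ g x = -1.

Lemma delta_adm_lt_PI_locally_constant (δ : R) :
  delta_adm isopen S0_dist g δ -> δ < PI -> locally_constant isopen g.
Proof.
  intros [_ Hδ] HPI x. destruct (Hδ x) as [U [HU [HUx Hd]]].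
  exists U. split; [|split]; [exact HU|exact HUx|].
  intros u v Hu Hv. apply NNPP; intros Huv.
  specialize (Hd u v Hu Hv). rewrite S0_dist_antipodal in Hd; auto. lra.
Qed.

Lemma locally_constant_delta_adm_0 :
  locally_constant isopen g -> delta_adm isopen S0_dist g 0.
Proof.
  intros Hg. split; [lra|]. intros x. destruct (Hg x) as [U [HU [HUx Hc]]].
  exists U. split; [|split]; [exact HU|exact HUx|].
  intros u v Hu Hv. rewrite (Hc u v Hu Hv), S0_dist_diag; auto. lra.
Qed.

Lemma delta_S0_eq_0_iff : delta isopen S0_dist g = Finite 0 <-> locally_constant isopen g.
Proof.
  split.
  - intros H0. destruct (delta_eq_0_small_adm isopen S0_dist g H0 PI PI_RGT_0) as [δ [Hδ HPI]].
    exact (delta_adm_lt_PI_locally_constant δ Hδ HPI).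
  - intros Hg. apply delta_eq_0, locally_constant_delta_adm_0, Hg.
Qed.

End S0Valued.

(* [/ 0 = 0] makes this hold at [u = 0] too. *)
Lemma Rdiv_Rabs_sign (u : R) : u / Rabs u = sign u.
Proof.
  destruct (Rtotal_order u 0) as [Hu|[->|Hu]].
  - rewrite sign_eq_m1, Rabs_left by exact Hu. field. lra.
  - rewrite sign_0, Rabs_R0. unfold Rdiv. ring.
  - rewrite sign_eq_1, Rabs_pos_eq by lra. field. lra.
Qed.

Lemma sign_pm1 (u : R) : u <> 0 -> sign u = 1 \/ sign u = -1.
Proof.
  intros Hu. destruct (Rdichotomy _ _ Hu).
  - right. now apply sign_eq_m1.
  - left. now apply sign_eq_1.
Qed.

Lemma sign_sub_swap (u v : R) : sign (u - v) = - sign (v - u).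
Proof. rewrite <- sign_opp. f_equal. ring. Qed.

Lemma Phi_sign (f : R -> R) (z : Conf2) :
  Phi f z = sign (f (fst (proj1_sig z)) - f (snd (proj1_sig z))).
Proof. apply Rdiv_Rabs_sign. Qed.

Lemma Phi_S0 (f : R -> R) : injective f -> forall z, Phi f z = 1 \/ Phi f z = -1.
Proof.
  intros Hf [[x y] Hxy]. rewrite Phi_sign. apply sign_pm1. simpl in *.
  intros E. apply Hxy, Hf. lra.
Qed.

Lemma Conf2_open_of_open (V : R * R -> Prop) :
  open V -> Conf2_open (fun z => V (proj1_sig z)).
Proof. intros HV. exists V. split; [exact HV|tauto]. Qed.

Lemma locally_constant_Conf2_half_plane (g : Conf2 -> R) (h : R * R -> R) :
  locally_constant Conf2_open g -> (forall z, g z = h (proj1_sig z)) ->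
  forall p q, fst p < snd p -> fst q < snd q -> h p = h q.
Proof.
  intros Hg Hgh [a b] [c d] Hab Hcd.
  destruct (half_plane_path a b c d Hab Hcd) as [γ [Hlt [Hγ [H0 H1]]]].
  set (z t := exist (fun p => fst p <> snd p) (γ t) (Rlt_not_eq _ _ (Hlt t))).
  assert (Hloc : forall t, locally t (fun s => g (z s) = g (z t))).
  { intros t. destruct (Hg (z t)) as [U [[V [HV HUV]] [HUt HU]]].
    assert (HVt : locally (γ t) V) by (apply HV, (HUV (z t)), HUt).
    apply (filter_imp (fun s => V (γ s))); [|exact (Hγ t V HVt)].
    intros s HVs. apply HU; [apply (HUV (z s)), HVs|exact HUt]. }
  rewrite <- H0, <- H1.
  change (h (proj1_sig (z 0)) = h (proj1_sig (z 1))).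
  rewrite <- !Hgh. exact (locally_const_R_eq (fun t => g (z t)) Hloc 0 1).
Qed.

Definition order_sign_constant (f : R -> R) : Prop :=
  forall a b c d, a < b -> c < d -> sign (f a - f b) = sign (f c - f d).

Lemma Phi_locally_constant_iff (f : R -> R) :
  locally_constant Conf2_open (Phi f) <-> order_sign_constant f.
Proof.
  split.
  - intros Hloc a b c d Hab Hcd.
    exact (locally_constant_Conf2_half_plane (Phi f) (fun p => sign (f (fst p) - f (snd p)))
             Hloc (Phi_sign f) (a, b) (c, d) Hab Hcd).
  - intros Hs [[x y] Hxy]. simpl in Hxy. destruct (Rdichotomy _ _ Hxy) as [Hlt|Hgt].
    + exists (fun z => fst (proj1_sig z) < snd (proj1_sig z)).
      split; [|split]; [|exact Hlt|].
      { apply (Conf2_open_of_open (fun p => fst p < snd p)), open_fst_lt_snd. }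
      intros u v Hu Hv. rewrite !Phi_sign. now apply Hs.
    + exists (fun z => snd (proj1_sig z) < fst (proj1_sig z)).
      split; [|split]; [|exact Hgt|].
      { apply (Conf2_open_of_open (fun p => snd p < fst p)), open_snd_lt_fst. }
      intros u v Hu Hv.
      rewrite !Phi_sign, (sign_sub_swap (f (fst (proj1_sig u)))),
        (sign_sub_swap (f (fst (proj1_sig v)))).
      f_equal. now apply Hs.
Qed.

Lemma injective_lt_of_le (f : R -> R) (x y : R) :
  injective f -> x <> y -> f x <= f y -> f x < f y.
Proof.
  intros Hf Hxy Hle. destruct (Rle_lt_or_eq_dec _ _ Hle) as [Hlt|Heq]; [exact Hlt|].
  exfalso. exact (Hxy (Hf _ _ Heq)).
Qed.

Lemma monotone_iff_order_sign_constant (f : R -> R) :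
  injective f -> monotone f <-> order_sign_constant f.
Proof.
  intros Hf. split.
  - intros [Hinc|Hdec] a b c d Hab Hcd.
    + rewrite !sign_eq_m1; [reflexivity| |];
        apply Rlt_minus, injective_lt_of_le, Hinc; auto; lra.
    + rewrite !sign_eq_1; [reflexivity| |];
        apply Rgt_minus, injective_lt_of_le, Hdec; auto; lra.
  - intros Hs.
    assert (H01 : f 0 <> f 1) by (intros E; apply Hf in E; lra).
    assert (Hs01 : forall x y, x < y -> sign (f x - f y) = sign (f 0 - f 1))
      by (intros x y Hxy; apply Hs; lra).
    destruct (Rdichotomy _ _ H01) as [Hlt|Hgt]; [left|right]; intros x y Hxy;
      destruct (Rle_lt_or_eq_dec _ _ Hxy) as [Hxy'|<-]; try lra;
      specialize (Hs01 x y Hxy'); apply Rnot_lt_le; intros Hc.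
    + rewrite sign_eq_1, sign_eq_m1 in Hs01 by lra. lra.
    + rewrite sign_eq_m1, sign_eq_1 in Hs01 by lra. lra.
Qed.

Theorem lemma3p9 (f : R -> R) (Hf : injective f) :
  alpha f = Finite 0%R <-> monotone f.
Proof.
  unfold alpha. rewrite (delta_S0_eq_0_iff _ Conf2_open (Phi f) (Phi_S0 f Hf)).
  rewrite Phi_locally_constant_iff, monotone_iff_order_sign_constant by exact Hf.
  reflexivity.
Qed.
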